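(* Let $\mathfrak{X}=(X,\{R_i\}_{i=0}^{d+1})$ be a commutative association scheme with $R_d^\top=R_{d+1}$ and $R_i^\top=R_i$ for $0\le i\le d-1$, adjacency matrices $A_0,\dots,A_{d+1}$ and primitive idempotents $E_0,\dots,E_{d+1}$; let $V_i=E_i\mathbb{C}^{|X|}$. Let its symmetrization $\tilde{\mathfrak X}=(X,\{\tilde R_i\}_{i=0}^d)$ ($\tilde R_i=R_i$ for $i\le d-1$, $\tilde R_d=R_d\cup R_{d+1}$) be amorphic with primitive idempotents $\tilde E_0,\dots,\tilde E_d$ numbered so that the adjacency matrix $\tilde A_i$ of $\tilde R_i$ (valency $k_i$) satisfies $\tilde A_i\tilde E_0=k_i\tilde E_0$, $\tilde A_i\tilde E_i=b_i\tilde E_i$, $\tilde A_i\tilde E_j=a_i\tilde E_j$ for $1\le j\le d$, $j\ne i$, with $a_i\ne b_i$. Let $1\le i,j\le d+1$ with $E_i,E_j\in\{\tilde E_1,\ldots,\tilde E_{d-1}\}$, and let $1\le r,s\le d-1$ be such that the eigenvalues of $A_r$ on $V_i$ and $V_j$ are $a_r$ and $b_r$ respectively, and the eigenvalues of $A_s$ on $V_i$ and $V_j$ are $b_s$ and $a_s$ respectively. Then $A_r$ and $A_s$ are the only two matrices among $A_0,\dots,A_{d+1}$ having distinct eigenvalues on $V_i$ and $V_j$.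
   Context: Association scheme: finite set $X$ with a partition of $X\times X$ into relations $R_0$ (diagonal), $R_1,\dots$, closed under transposition, with constant intersection numbers; commutative if these are symmetric in the lower indices. Adjacency matrices are the $01$-matrices of the relations; the primitive idempotents of the (commutative) Bose–Mesner algebra satisfy $A_iE_j=p_i(j)E_j$, and $p_i(j)$ is called the eigenvalue of $A_i$ on $V_j$. A symmetric scheme is amorphic if merging the nondiagonal relations along any partition of their index set into nonempty parts gives an association scheme. *)

From HB Require Import structures.
From mathcomp Require Import all_boot all_order all_algebra all_field.
Set Implicit Arguments. Unset Strict Implicit. Unset Printing Implicit Defensive.
Import Order.TTheory GRing.Theory Num.Theory.
Local Open Scope ring_scope.

(* An association scheme on X = 'I_n with classes R_0, ..., R_(D-1) is encoded
   by the class function R : 'I_n -> 'I_n -> 'I_D, R x y = i iff (x,y) \in R_i. *)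

Definition is_scheme (n D : nat) (R : 'I_n -> 'I_n -> 'I_D) : Prop :=
  (forall x y, (val (R x y) == 0%N) = (x == y)) /\
  (forall i : 'I_D, exists x y, R x y = i) /\
  (forall i : 'I_D, exists j : 'I_D, forall x y, (R x y == i) = (R y x == j)) /\
  (forall i j h : 'I_D, exists p : nat, forall x y, R x y = h ->
      #|[set z | (R x z == i) && (R z y == j)]| = p).

Definition is_comm_scheme (n D : nat) (R : 'I_n -> 'I_n -> 'I_D) : Prop :=
  is_scheme R /\
  (forall (i j : 'I_D) (x y : 'I_n),
      #|[set z | (R x z == i) && (R z y == j)]| =
      #|[set z | (R x z == j) && (R z y == i)]|).

Definition is_symmetric_scheme (n D : nat) (R : 'I_n -> 'I_n -> 'I_D) : Prop :=
  is_scheme R /\ (forall x y, R y x = R x y).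

(* amorphic: merging the nondiagonal relations along any partition of their
   index set into nonempty parts (encoded by a surjection g sending exactly the
   index 0 to 0) gives an association scheme *)
Definition is_amorphic (n D : nat) (R : 'I_n -> 'I_n -> 'I_D) : Prop :=
  is_symmetric_scheme R /\
  forall (m : nat) (g : 'I_D -> 'I_m.+1),
    (forall i : 'I_D, (g i == ord0) = (val i == 0%N)) ->
    (forall k : 'I_m.+1, exists i, g i = k) ->
    is_scheme (fun x y => g (R x y)).

Definition adj (n D : nat) (R : 'I_n -> 'I_n -> 'I_D) (i : 'I_D) : 'M[algC]_n :=
  \matrix_(x, y) ((R x y == i)%:R).

Definition in_BM (n D : nat) (R : 'I_n -> 'I_n -> 'I_D) (M : 'M[algC]_n) : Prop :=
  exists c : 'I_D -> algC, M = \sum_(i < D) c i *: adj R i.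

Definition is_idem (n : nat) (M : 'M[algC]_n) : Prop := M *m M = M.

Definition is_prim_idem (n D : nat) (R : 'I_n -> 'I_n -> 'I_D) (E : 'M[algC]_n) : Prop :=
  in_BM R E /\ E != 0 /\ is_idem E /\
  forall F, in_BM R F -> is_idem F -> F != 0 -> F *m E = F -> F = E.

Definition prim_idems (n D : nat) (R : 'I_n -> 'I_n -> 'I_D) (E : 'I_D -> 'M[algC]_n) : Prop :=
  injective E /\ (forall k, is_prim_idem R (E k)) /\
  (forall F, is_prim_idem R F -> exists k, F = E k).

(* symmetrization: R_d and R_(d+1) merged into class d *)
Definition symmetrize (n d : nat) (R : 'I_n -> 'I_n -> 'I_d.+2) : 'I_n -> 'I_n -> 'I_d.+1 :=
  fun x y => inord (minn (R x y) d).

From HB Require Import structures.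
From mathcomp Require Import all_boot all_order all_algebra all_field.
From mathcomp Require Import zify.
Import GRing.Theory Num.Theory.
Set Implicit Arguments. Unset Strict Implicit.
Local Open Scope ring_scope.

(* On a primitive idempotent Et_k of the symmetrized scheme with 0 < k < d, the
   matrix A_h acts by a scalar which only depends on h unless h = k: A_0 = I;
   for 0 < h < d, A_h is the adjacency matrix of the symmetrized relation h and
   acts by a_h; and A_d, A_(d+1) act by half the eigenvalue a_d of
   A_d + A_d^T = A_(d+1) + A_(d+1)^T, because Et_k is a symmetric idempotent.
   Since a_r <> b_r and b_r is the eigenvalue of the symmetrized A_r only on
   Et_r, the hypotheses force E_j = Et_r and E_i = Et_s, so that A_h
   separates V_i and V_j exactly when h is r or s. *)

Lemma scalerIl (F : fieldType) (V : lmodType F) (v : V) :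
  v != 0 -> injective ( *:%R^~ v).
Proof.
move=> v_neq0 t u /= tu; apply/eqP; rewrite -subr_eq0.
have : (t - u) *: v == 0 by rewrite scalerBl tu subrr.
by rewrite scaler_eq0 (negbTE v_neq0) orbF.
Qed.

Lemma eigenvalue_addtrmx (F : fieldType) n (A P : 'M[F]_n) (t c : F) :
  P^T = P -> P *m P = P -> P != 0 ->
  A *m P = t *: P -> (A + A^T) *m P = c *: P -> t *+ 2 = c.
Proof.
move=> trP idemP P_neq0 AP AtrAP.
have trAP : A^T *m P = (c - t) *: P.
  by rewrite scalerBl -AtrAP -AP mulmxDl addrC addKr.
have PtrA : P *m A^T = t *: P by rewrite -{1}trP -trmx_mul AP linearZ /= trP.
have : t *: P = (c - t) *: P.
  by rewrite -{1}idemP scalemxAl -PtrA -mulmxA trAP -scalemxAr idemP.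
by move/(scalerIl P_neq0) => tE; rewrite mulr2n {2}tE addrC subrK.
Qed.

Lemma adj_diag n D (R : 'I_n -> 'I_n -> 'I_D) (h : 'I_D) :
  (forall x y, (val (R x y) == 0%N) = (x == y)) -> val h = 0%N -> adj R h = 1%:M.
Proof.
by move=> R0_diag h0; apply/matrixP => x y; rewrite !mxE -R0_diag -h0 val_eqE.
Qed.

Lemma in_BM_trmx n D (R : 'I_n -> 'I_n -> 'I_D) (M : 'M[algC]_n) :
  (forall x y, R y x = R x y) -> in_BM R M -> M^T = M.
Proof.
move=> R_sym [c ->]; rewrite linear_sum; apply: eq_bigr => i _.
by rewrite linearZ; congr (_ *: _); apply/matrixP => x y; rewrite !mxE R_sym.
Qed.

Section Symmetrization.

Variables (n d : nat) (R : 'I_n -> 'I_n -> 'I_d.+2).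

Lemma adj_symmetrize_lt (k : nat) :
  (k < d)%N -> adj R (inord k) = adj (symmetrize R) (inord k).
Proof.
move=> kd; apply/matrixP => x y; rewrite !mxE /symmetrize; congr (_%:R).
by rewrite -!val_eqE /= !inordK; lia.
Qed.

Hypothesis Rd_tr : forall x y, (val (R x y) == d) = (val (R y x) == d.+1).

Lemma adj_symmetrize_max (h : 'I_d.+2) :
  (d <= h)%N -> adj R h + (adj R h)^T = adj (symmetrize R) ord_max.
Proof.
move=> dh; apply/matrixP => x y; rewrite !mxE /symmetrize -natrD; congr (_%:R).
have := Rd_tr x y; have := Rd_tr y x.
have := ltn_ord (R x y); have := ltn_ord (R y x); have := ltn_ord h.
rewrite -!val_eqE /= inordK; last by lia.
by do 4 case: eqP => /= ?; lia.
Qed.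

End Symmetrization.

Lemma eigenvalue_b_index n m (F : fieldType) (At Et : 'I_m -> 'M[F]_n)
    (a b : 'I_m -> F) (k l : 'I_m) :
  (forall k' l' : 'I_m, (0 < k')%N -> (0 < l')%N -> l' != k' ->
     At k' *m Et l' = a k' *: Et l') ->
  (forall k' : 'I_m, (0 < k')%N -> a k' != b k') -> (forall k' : 'I_m, Et k' != 0) ->
  (0 < k)%N -> (0 < l)%N -> At k *m Et l = b k *: Et l -> l = k.
Proof.
move=> eigen_a a_neq_b Et_neq0 k0 l0 AEb; apply/eqP.
apply: contraTT (a_neq_b k k0) => lk; rewrite negbK; apply/eqP.
by apply: (scalerIl (Et_neq0 l)); rewrite -eigen_a.
Qed.

Section OffIndexEigenvalue.

Variables (n d : nat) (R : 'I_n -> 'I_n -> 'I_d.+2).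
Variables (Et : 'I_d.+1 -> 'M[algC]_n) (a : 'I_d.+1 -> algC).

Hypothesis R0_diag : forall x y, (val (R x y) == 0%N) = (x == y).
Hypothesis Rd_tr : forall x y, (val (R x y) == d) = (val (R y x) == d.+1).
Hypothesis Et_tr : forall k, (Et k)^T = Et k.
Hypothesis Et_idem : forall k, Et k *m Et k = Et k.
Hypothesis Et_neq0 : forall k, Et k != 0.
Hypothesis eigen_a : forall k l : 'I_d.+1, (0 < k)%N -> (0 < l)%N -> l != k ->
  adj (symmetrize R) k *m Et l = a k *: Et l.

Definition off_index_eigenvalue (h : 'I_d.+2) : algC :=
  if val h == 0%N then 1 else if (h < d)%N then a (inord h) else a ord_max / 2%:R.

Lemma adj_eigenvalue_off_index (h : 'I_d.+2) (k : nat) (t : algC) :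
  (0 < k < d)%N -> h != inord k ->
  adj R h *m Et (inord k) = t *: Et (inord k) -> t = off_index_eigenvalue h.
Proof.
move=> /andP[k0 kd] hk AP; rewrite /off_index_eigenvalue.
have vk : (inord k : 'I_d.+1) = k :> nat by rewrite inordK //; lia.
have {}hk : h != k :> nat by apply: contra hk => /eqP <-; rewrite inord_val.
have [h0 | h_neq0] := eqVneq (h : nat) 0%N.
  apply: (scalerIl (Et_neq0 (inord k))).
  by rewrite -AP scale1r (adj_diag R0_diag h0) mul1mx.
case: ltnP => hd.
  have vh : (inord h : 'I_d.+1) = h :> nat by rewrite inordK //; lia.
  have Ah : adj R h = adj (symmetrize R) (inord h).
    by rewrite -adj_symmetrize_lt // inord_val.
  apply: (scalerIl (Et_neq0 (inord k))).
  by rewrite -AP Ah eigen_a -?val_eqE /= ?vh ?vk //; lia.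
have AtrAP : (adj R h + (adj R h)^T) *m Et (inord k) = a ord_max *: Et (inord k).
  by rewrite adj_symmetrize_max // eigen_a -?val_eqE /= ?vk //; lia.
rewrite -(eigenvalue_addtrmx (Et_tr _) (Et_idem _) (Et_neq0 _) AP AtrAP).
by rewrite -[t *+ 2]mulr_natr mulfK // pnatr_eq0.
Qed.

End OffIndexEigenvalue.

Theorem lemma3p4 (n d : nat) (R : 'I_n -> 'I_n -> 'I_d.+2)
  (E : 'I_d.+2 -> 'M[algC]_n) (Et : 'I_d.+1 -> 'M[algC]_n)
  (a b : 'I_d.+1 -> algC) (i j : 'I_d.+2) (r s : nat) :
  is_comm_scheme R ->
  (* R_d^T = R_(d+1) *)
  (forall x y, (val (R x y) == d) = (val (R y x) == d.+1)) ->
  (* R_i^T = R_i for 0 <= i <= d-1 *)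
  (forall x y, (R x y < d)%N -> R y x = R x y) ->
  prim_idems R E ->
  is_amorphic (symmetrize R) ->
  prim_idems (symmetrize R) Et ->
  (forall k : 'I_d.+1, forall x : 'I_n,
     adj (symmetrize R) k *m Et ord0 =
     (#|[set y | symmetrize R x y == k]|)%:R *: Et ord0) ->
  (forall k : 'I_d.+1, (0 < k)%N ->
     adj (symmetrize R) k *m Et k = b k *: Et k) ->
  (forall k l : 'I_d.+1, (0 < k)%N -> (0 < l)%N -> l != k ->
     adj (symmetrize R) k *m Et l = a k *: Et l) ->
  (forall k : 'I_d.+1, (0 < k)%N -> a k != b k) ->
  (0 < i)%N -> (0 < j)%N ->
  (exists k : 'I_d.+1, (0 < k < d)%N /\ E i = Et k) ->
  (exists k : 'I_d.+1, (0 < k < d)%N /\ E j = Et k) ->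
  (0 < r < d)%N -> (0 < s < d)%N ->
  adj R (inord r) *m E i = a (inord r) *: E i ->
  adj R (inord r) *m E j = b (inord r) *: E j ->
  adj R (inord s) *m E i = b (inord s) *: E i ->
  adj R (inord s) *m E j = a (inord s) *: E j ->
  forall h : 'I_d.+2,
    (exists t1 t2 : algC, t1 != t2 /\
       adj R h *m E i = t1 *: E i /\ adj R h *m E j = t2 *: E j)
    <-> (h = inord r \/ h = inord s).
Proof.
move=> [[R0_diag _] _] Rd_tr _ _ [[_ Rt_sym] _] [_ [Et_prim _]] _ _ eigen_a a_neq_b _ _
  [ki [/andP[ki0 _] ->]] [kj [/andP[kj0 _] ->]] rP sP Ari Arj Asi Asj h.
have Et_neq0 k : Et k != 0 by have [_ []] := Et_prim k.
have Et_idem k : Et k *m Et k = Et k by have [_ [_ []]] := Et_prim k.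
have Et_tr k : (Et k)^T = Et k by have [BM _] := Et_prim k; apply: in_BM_trmx BM.
have /andP[r0 rd] := rP; have /andP[s0 sd] := sP.
have vr : (inord r : 'I_d.+1) = r :> nat by rewrite inordK //; lia.
have vs : (inord s : 'I_d.+1) = s :> nat by rewrite inordK //; lia.
have kj_r : kj = inord r.
  by apply: (eigenvalue_b_index eigen_a a_neq_b) => //; rewrite ?vr // -adj_symmetrize_lt.
have ki_s : ki = inord s.
  by apply: (eigenvalue_b_index eigen_a a_neq_b) => //; rewrite ?vs // -adj_symmetrize_lt.
subst kj ki.
have off := adj_eigenvalue_off_index R0_diag Rd_tr Et_tr Et_idem Et_neq0 eigen_a.
split=> [[t1 [t2 [t12 [Ai Aj]]]] | [] ->].
- have [->|hr] := eqVneq h (inord r); first by left.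
  have [->|hs] := eqVneq h (inord s); first by right.
  by move: t12; rewrite (off _ _ _ sP hs Ai) (off _ _ _ rP hr Aj) eqxx.
- by exists (a (inord r)), (b (inord r)); split=> //; apply: a_neq_b; rewrite vr.
- by exists (b (inord s)), (a (inord s)); split=> //; rewrite eq_sym; apply: a_neq_b; rewrite vs.
Qed.
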